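(* For any diagonal section $\delta$, the function $U_\delta\colon[0,1]^2\to[0,1]$ defined by $$U_\delta(x,y)=\min\left\{x,\;y,\;y-\frac12\left(\widehat{\delta}(x)+\widehat{\delta}(y)+\mathrm{TV}_x^y(\widehat{\delta})\right)\right\}$$ is a copula with diagonal section $\delta$, i.e. $U_\delta$ is a copula and $U_\delta(t,t)=\delta(t)$ for all $t\in[0,1]$.
   Context: $\mathbb{I}=[0,1]$. A (bivariate) copula is a function $C\colon\mathbb{I}^2\to\mathbb{I}$ with $C(x,0)=C(0,y)=0$, $C(x,1)=x$, $C(1,y)=y$ for all $x,y$, and $C(b,d)+C(a,c)-C(b,c)-C(a,d)\ge 0$ for all $a\le b$, $c\le d$ in $\mathbb{I}$. A diagonal section is a function $\delta\colon\mathbb{I}\to\mathbb{I}$ with $\delta(x)\le x$ for all $x$, $0\le\delta(y)-\delta(x)\le 2(y-x)$ whenever $x\le y$, and $\delta(1)=1$. Write $\widehat{\delta}(x)=x-\delta(x)$. For $f\colon\mathbb{I}\to\mathbb{R}$ and $0\le x\le y\le1$, $\mathrm{TV}_x^y(f)=\sup\{\sum_{i=1}^n|f(x_i)-f(x_{i-1})|: x=x_0<x_1<\dots<x_n=y\}$ is the total variation of $f$ on $[x,y]$; for $y<x$ one sets $\mathrm{TV}_x^y(f)=-\mathrm{TV}_y^x(f)$. *)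

From Stdlib Require Import Reals Lra List.
From Coquelicot Require Import Coquelicot.
Open Scope R_scope.

(* Copula on I^2 (functions defined on all of R^2, only values on I^2 matter). *)
Definition in_I (x : R) : Prop := 0 <= x <= 1.

Definition is_copula (C : R -> R -> R) : Prop :=
  (forall x y, in_I x -> in_I y -> in_I (C x y)) /\
  (forall x, in_I x -> C x 0 = 0 /\ C 0 x = 0 /\ C x 1 = x /\ C 1 x = x) /\
  (forall a b c d, in_I a -> in_I b -> in_I c -> in_I d -> a <= b -> c <= d ->
      C b d + C a c - C b c - C a d >= 0).

Definition is_diagonal_section (delta : R -> R) : Prop :=
  (forall x, in_I x -> in_I (delta x)) /\
  (forall x, in_I x -> delta x <= x) /\
  (forall x y, in_I x -> in_I y -> x <= y ->
      0 <= delta y - delta x <= 2 * (y - x)) /\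
  delta 1 = 1.

Definition delta_hat (delta : R -> R) (x : R) : R := x - delta x.

Fixpoint strictly_increasing (l : list R) : Prop :=
  match l with
  | a :: ((b :: _) as t) => a < b /\ strictly_increasing t
  | _ => True
  end.

Definition is_partition (x y : R) (l : list R) : Prop :=
  hd 0 l = x /\ last l 0 = y /\ l <> nil /\ strictly_increasing l.

Fixpoint var_sum (f : R -> R) (l : list R) : R :=
  match l with
  | a :: ((b :: _) as t) => Rabs (f b - f a) + var_sum f t
  | _ => 0
  end.

Definition TV_Rbar (f : R -> R) (x y : R) : Rbar :=
  Lub_Rbar (fun s => exists l, is_partition x y l /\ s = var_sum f l).

(* signed total variation TV_x^y, as a real number; for y < x it is -TV_y^x.
   (For the Lipschitz function delta_hat it is always finite.) *)
Definition TV (f : R -> R) (x y : R) : R :=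
  if Rle_dec x y then real (TV_Rbar f x y) else - real (TV_Rbar f y x).

Definition U_delta (delta : R -> R) (x y : R) : R :=
  Rmin x (Rmin y
    (y - / 2 * (delta_hat delta x + delta_hat delta y
                 + TV (delta_hat delta) x y))).

(* The 1-Lipschitz function h = delta_hat is controlled by V(t) = TV_0^t(h):
   |h q - h p| <= V q - V p <= q - p for p <= q, and additivity of total
   variation turns TV_x^y(h) into V y - V x.  With these two facts alone
   (plus h >= 0 and h 0 = h 1 = 0) the copula axioms for
   min {x, y, y - (h x + h y + V y - V x) / 2} become linear inequalities
   between the values of h and V at the corners of a rectangle. *)
From Stdlib Require Import Reals Lra List.
From Coquelicot Require Import Coquelicot.
Open Scope R_scope.

Lemma in_I_0 : in_I 0.
Proof. unfold in_I; lra. Qed.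

Lemma in_I_1 : in_I 1.
Proof. unfold in_I; lra. Qed.

Lemma is_copula_ext (C D : R -> R -> R) :
  (forall x y, in_I x -> in_I y -> C x y = D x y) -> is_copula D -> is_copula C.
Proof.
  intros CD [HI [Hb H2]]. split; [|split].
  - intros x y Ix Iy. rewrite CD by assumption. auto.
  - intros x Ix. rewrite !CD by auto using in_I_0, in_I_1. auto.
  - intros a b c d Ia Ib Ic Id Hab Hcd. rewrite !CD by assumption. auto.
Qed.

Lemma Lub_Rbar_finite_spec (E : R -> Prop) (s0 M : R) :
  E s0 -> (forall s, E s -> s <= M) ->
  (forall s, E s -> s <= real (Lub_Rbar E)) /\
  (forall M', (forall s, E s -> s <= M') -> real (Lub_Rbar E) <= M').
Proof.
  intros Es0 HM. destruct (Lub_Rbar_correct E) as [ub lub].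
  destruct (Lub_Rbar E) as [l| |].
  - split.
    + exact ub.
    + intros M' HM'. exact (lub (Finite M') HM').
  - exfalso. exact (lub (Finite M) HM).
  - exfalso. exact (ub s0 Es0).
Qed.

Lemma last_cons_cons (a b : R) (r : list R) : last (a :: b :: r) 0 = last (b :: r) 0.
Proof. reflexivity. Qed.

Lemma var_sum_cons_cons (f : R -> R) (a b : R) (r : list R) :
  var_sum f (a :: b :: r) = Rabs (f b - f a) + var_sum f (b :: r).
Proof. reflexivity. Qed.

Lemma strictly_increasing_cons_cons (a b : R) (r : list R) :
  strictly_increasing (a :: b :: r) <-> a < b /\ strictly_increasing (b :: r).
Proof. reflexivity. Qed.

Lemma strictly_increasing_bounds (l : list R) (a : R) :
  strictly_increasing (a :: l) ->
  forall z, In z (a :: l) -> a <= z <= last (a :: l) 0.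
Proof.
  revert a. induction l as [|b r IH]; intros a Hs z Hz.
  - destruct Hz as [<-|[]]. simpl. lra.
  - rewrite last_cons_cons. apply strictly_increasing_cons_cons in Hs as [Hab Hs].
    assert (Hb := IH b Hs b (or_introl eq_refl)).
    destruct Hz as [<-|Hz]; [lra|].
    assert (H := IH b Hs z Hz). lra.
Qed.

Lemma is_partition_cons (a b : R) (l : list R) :
  is_partition a b l ->
  exists l', l = a :: l' /\ strictly_increasing (a :: l') /\ last (a :: l') 0 = b.
Proof.
  intros [Hhd [Hlast [Hnil Hs]]]. destruct l as [|x l']; [easy|].
  simpl in Hhd. subst x. exists l'. tauto.
Qed.

Lemma is_partition_exists (a b : R) : a <= b -> exists l, is_partition a b l.
Proof.
  intros Hab. destruct (Req_dec a b) as [<-|Hne].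
  - exists (a :: nil). repeat split; easy.
  - exists (a :: b :: nil). repeat split; simpl; try easy; lra.
Qed.

Lemma Rabs_sub_le_var_sum (f : R -> R) (l : list R) (a : R) :
  Rabs (f (last (a :: l) 0) - f a) <= var_sum f (a :: l).
Proof.
  revert a. induction l as [|b r IH]; intros a.
  - simpl. rewrite Rminus_diag, Rabs_R0. lra.
  - rewrite var_sum_cons_cons, last_cons_cons.
    assert (H := IH b). assert (Htri := Rdist_tri (f (last (b :: r) 0)) (f a) (f b)).
    unfold Rdist in Htri. lra.
Qed.

Definition tvar (f : R -> R) (a b : R) : R := real (TV_Rbar f a b).

Definition controls (V h : R -> R) : Prop :=
  forall p q, in_I p -> in_I q -> p <= q -> Rabs (h q - h p) <= V q - V p <= q - p.

Section TotalVariation.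

Variable f : R -> R.

Hypothesis f_lipschitz :
  forall x y, in_I x -> in_I y -> x <= y -> Rabs (f y - f x) <= y - x.

Lemma var_sum_le_length (l : list R) (a : R) :
  strictly_increasing (a :: l) -> (forall z, In z (a :: l) -> in_I z) ->
  var_sum f (a :: l) <= last (a :: l) 0 - a.
Proof.
  revert a. induction l as [|b r IH]; intros a Hs HI.
  - simpl. lra.
  - rewrite var_sum_cons_cons, last_cons_cons.
    apply strictly_increasing_cons_cons in Hs as [Hab Hs].
    assert (H1 := IH b Hs (fun z Hz => HI z (or_intror Hz))).
    assert (H2 := f_lipschitz a b (HI a (or_introl eq_refl))
                    (HI b (or_intror (or_introl eq_refl))) (Rlt_le _ _ Hab)).
    lra.
Qed.

Lemma partition_var_sum_le (a b : R) (l : list R) :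
  in_I a -> in_I b -> is_partition a b l -> var_sum f l <= b - a.
Proof.
  intros Ia Ib Hl. destruct (is_partition_cons a b l Hl) as [l' [-> [Hs Hlast]]].
  rewrite <- Hlast. apply var_sum_le_length; [exact Hs|].
  intros z Hz. assert (Hz' := strictly_increasing_bounds l' a Hs z Hz).
  rewrite Hlast in Hz'. unfold in_I in *. lra.
Qed.

Lemma tvar_spec (a b : R) : in_I a -> in_I b -> a <= b ->
  (forall l, is_partition a b l -> var_sum f l <= tvar f a b) /\
  (forall M, (forall l, is_partition a b l -> var_sum f l <= M) -> tvar f a b <= M).
Proof.
  intros Ia Ib Hab. destruct (is_partition_exists a b Hab) as [l0 Hl0].
  destruct (Lub_Rbar_finite_spec (fun s => exists l, is_partition a b l /\ s = var_sum f l)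
              (var_sum f l0) (b - a)) as [ub lub].
  - exists l0. easy.
  - intros s [l [Hl ->]]. exact (partition_var_sum_le a b l Ia Ib Hl).
  - split.
    + intros l Hl. apply ub. exists l. easy.
    + intros M HM. apply lub. intros s [l [Hl ->]]. exact (HM l Hl).
Qed.

Lemma tvar_le_length (a b : R) : in_I a -> in_I b -> a <= b -> tvar f a b <= b - a.
Proof.
  intros Ia Ib Hab. apply (tvar_spec a b Ia Ib Hab).
  intros l Hl. exact (partition_var_sum_le a b l Ia Ib Hl).
Qed.

Lemma Rabs_sub_le_tvar (a b : R) :
  in_I a -> in_I b -> a <= b -> Rabs (f b - f a) <= tvar f a b.
Proof.
  intros Ia Ib Hab. destruct (is_partition_exists a b Hab) as [l Hl].
  assert (Hle := proj1 (tvar_spec a b Ia Ib Hab) l Hl).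
  destruct (is_partition_cons a b l Hl) as [l' [-> [_ Hlast]]].
  assert (H := Rabs_sub_le_var_sum f l' a). rewrite Hlast in H. lra.
Qed.

Lemma tvar_ge0 (a b : R) : in_I a -> in_I b -> a <= b -> 0 <= tvar f a b.
Proof.
  intros Ia Ib Hab. apply Rle_trans with (2 := Rabs_sub_le_tvar a b Ia Ib Hab).
  apply Rabs_pos.
Qed.

Lemma tvar_cons_le (a x b : R) : in_I a -> in_I b -> a < x -> x <= b ->
  Rabs (f x - f a) + tvar f x b <= tvar f a b.
Proof.
  intros Ia Ib Hax Hxb. assert (Ix : in_I x) by (unfold in_I in *; lra).
  assert (tvar f x b <= tvar f a b - Rabs (f x - f a)); [|lra].
  apply (tvar_spec x b Ix Ib Hxb). intros l Hl.
  destruct (is_partition_cons x b l Hl) as [l' [-> [Hs Hlast]]].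
  assert (Hp : is_partition a b (a :: x :: l')).
  { repeat split; try easy. }
  assert (H := proj1 (tvar_spec a b Ia Ib ltac:(lra)) _ Hp).
  rewrite var_sum_cons_cons in H. lra.
Qed.

Lemma tvar_superadditive (a b c : R) : in_I a -> in_I b -> in_I c -> a <= b -> b <= c ->
  tvar f a b + tvar f b c <= tvar f a c.
Proof.
  intros Ia Ib Ic Hab Hbc.
  assert (tvar f a b <= tvar f a c - tvar f b c); [|lra].
  apply (tvar_spec a b Ia Ib Hab). intros l Hl.
  destruct (is_partition_cons a b l Hl) as [l' [-> [Hs Hlast]]]. clear Hl.
  cut (var_sum f (a :: l') + tvar f b c <= tvar f a c); [lra|].
  revert a Ia Hab Hs Hlast. induction l' as [|x r IH]; intros a Ia Hab Hs Hlast.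
  - simpl in Hlast. subst a. simpl. lra.
  - rewrite var_sum_cons_cons. rewrite last_cons_cons in Hlast.
    apply strictly_increasing_cons_cons in Hs as [Hax Hs].
    assert (Hxb := strictly_increasing_bounds r x Hs x (or_introl eq_refl)).
    rewrite Hlast in Hxb. assert (Ix : in_I x) by (unfold in_I in *; lra).
    assert (H1 := IH x Ix ltac:(lra) Hs Hlast).
    assert (H2 := tvar_cons_le a x c Ia Ic Hax ltac:(lra)). lra.
Qed.

Lemma tvar_subadditive (a b c : R) : in_I a -> in_I b -> in_I c -> a <= b -> b <= c ->
  tvar f a c <= tvar f a b + tvar f b c.
Proof.
  intros Ia Ib Ic Hab Hbc. apply (tvar_spec a c Ia Ic ltac:(lra)). intros l Hl.
  destruct (is_partition_cons a c l Hl) as [l' [-> [Hs Hlast]]]. clear Hl.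
  revert a Ia Hab Hs Hlast. induction l' as [|x r IH]; intros a Ia Hab Hs Hlast.
  - simpl in Hlast. subst a. assert (b = c) by lra. subst b.
    assert (H := tvar_ge0 c c Ic Ic (Rle_refl _)). simpl. lra.
  - rewrite var_sum_cons_cons. rewrite last_cons_cons in Hlast.
    apply strictly_increasing_cons_cons in Hs as [Hax Hs].
    assert (Hxc := strictly_increasing_bounds r x Hs x (or_introl eq_refl)).
    rewrite Hlast in Hxc. assert (Ix : in_I x) by (unfold in_I in *; lra).
    destruct (Rle_dec x b) as [Hxb|Hbx].
    + assert (H1 := IH x Ix Hxb Hs Hlast).
      assert (H2 := tvar_cons_le a x b Ia Ib Hax Hxb). lra.
    + assert (Hp : is_partition b c (b :: x :: r)).
      { repeat split; try easy. lra. }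
      assert (H1 := proj1 (tvar_spec b c Ib Ic Hbc) _ Hp). rewrite var_sum_cons_cons in H1.
      assert (H2 := Rabs_sub_le_tvar a b Ia Ib Hab).
      assert (Htri := Rdist_tri (f x) (f a) (f b)). unfold Rdist in Htri. lra.
Qed.

Lemma tvar_additive (a b c : R) : in_I a -> in_I b -> in_I c -> a <= b -> b <= c ->
  tvar f a c = tvar f a b + tvar f b c.
Proof.
  intros. apply Rle_antisym; [apply tvar_subadditive|apply tvar_superadditive]; auto.
Qed.

Lemma TV_eq_tvar_sub (x y : R) : in_I x -> in_I y -> TV f x y = tvar f 0 y - tvar f 0 x.
Proof.
  intros Ix Iy. assert (Hx := Ix). assert (Hy := Iy). unfold in_I in Hx, Hy.
  unfold TV. fold (tvar f x y) (tvar f y x). destruct (Rle_dec x y).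
  - rewrite (tvar_additive 0 x y); auto using in_I_0; lra.
  - rewrite (tvar_additive 0 y x); auto using in_I_0; lra.
Qed.

Lemma tvar_controls : controls (tvar f 0) f.
Proof.
  intros p q Ip Iq Hpq. assert (Hp0 : 0 <= p) by (unfold in_I in Ip; lra).
  rewrite (tvar_additive 0 p q in_I_0 Ip Iq Hp0 Hpq).
  assert (H1 := Rabs_sub_le_tvar p q Ip Iq Hpq).
  assert (H2 := tvar_le_length p q Ip Iq Hpq). lra.
Qed.

End TotalVariation.

Definition U_of (h V : R -> R) (x y : R) : R :=
  Rmin x (Rmin y (y - / 2 * (h x + h y + (V y - V x)))).

Section ControlledCopula.

Variables h V : R -> R.

Hypothesis V_controls_h : controls V h.
Hypothesis h_ge0 : forall x, in_I x -> 0 <= h x.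
Hypothesis h_0 : h 0 = 0.
Hypothesis h_1 : h 1 = 0.

Lemma controls_between (p q : R) : in_I p -> in_I q -> p <= q ->
  h q - h p <= V q - V p /\ h p - h q <= V q - V p /\ V q - V p <= q - p.
Proof.
  intros Ip Iq Hpq. destruct (V_controls_h p q Ip Iq Hpq) as [Habs Hlen].
  apply Rabs_le_between in Habs. lra.
Qed.

Lemma U_of_in_I (x y : R) : in_I x -> in_I y -> in_I (U_of h V x y).
Proof.
  intros Ix Iy. assert (Hx := h_ge0 x Ix). assert (Hy := h_ge0 y Iy).
  destruct (controls_between 0 x in_I_0 Ix ltac:(unfold in_I in Ix; lra)) as [Hx0 [_ Vx0]].
  destruct (controls_between 0 y in_I_0 Iy ltac:(unfold in_I in Iy; lra)) as [Hy0 [_ Vy0]].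
  rewrite h_0 in Hx0, Hy0. unfold U_of, in_I in *.
  destruct (Rle_dec x y) as [Hxy|Hyx].
  - destruct (controls_between x y Ix Iy Hxy) as [F1 [F2 F3]].
    unfold Rmin. repeat destruct Rle_dec; lra.
  - destruct (controls_between y x Iy Ix ltac:(lra)) as [F1 [F2 F3]].
    unfold Rmin. repeat destruct Rle_dec; lra.
Qed.

Lemma U_of_boundary (x : R) : in_I x ->
  U_of h V x 0 = 0 /\ U_of h V 0 x = 0 /\ U_of h V x 1 = x /\ U_of h V 1 x = x.
Proof.
  intros Ix. assert (Hx := h_ge0 x Ix). assert (Ix' := Ix). unfold in_I in Ix'.
  destruct (controls_between 0 x in_I_0 Ix ltac:(lra)) as [F1 [F2 F3]].
  destruct (controls_between x 1 Ix in_I_1 ltac:(lra)) as [G1 [G2 G3]].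
  unfold U_of. rewrite h_0, h_1 in *.
  repeat split; unfold Rmin; repeat destruct Rle_dec; lra.
Qed.

Lemma U_of_2increasing (a b c d : R) :
  in_I a -> in_I b -> in_I c -> in_I d -> a <= b -> c <= d ->
  U_of h V b d + U_of h V a c - U_of h V b c - U_of h V a d >= 0.
Proof.
  intros Ia Ib Ic Id Hab Hcd.
  destruct (controls_between a b Ia Ib Hab) as [F1 [F2 F3]].
  destruct (controls_between c d Ic Id Hcd) as [G1 [G2 G3]].
  unfold U_of, Rmin. repeat destruct Rle_dec; lra.
Qed.

Lemma U_of_copula : is_copula (U_of h V).
Proof.
  split; [exact U_of_in_I|split; [exact U_of_boundary|exact U_of_2increasing]].
Qed.

Lemma U_of_diag (t : R) : in_I t -> U_of h V t t = t - h t.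
Proof.
  intros It. assert (Ht := h_ge0 t It).
  unfold U_of.
  unfold Rmin. repeat destruct Rle_dec; lra.
Qed.

End ControlledCopula.

Section DiagonalSection.

Variable delta : R -> R.

Hypothesis delta_diag : is_diagonal_section delta.

Lemma delta_hat_lipschitz (x y : R) : in_I x -> in_I y -> x <= y ->
  Rabs (delta_hat delta y - delta_hat delta x) <= y - x.
Proof.
  intros Ix Iy Hxy. destruct delta_diag as [_ [_ [Hinc _]]].
  assert (H := Hinc x y Ix Iy Hxy). unfold delta_hat. apply Rabs_le. lra.
Qed.

Lemma delta_hat_ge0 (x : R) : in_I x -> 0 <= delta_hat delta x.
Proof.
  intros Ix. destruct delta_diag as [_ [Hle _]].
  assert (H := Hle x Ix). unfold delta_hat. lra.
Qed.

Lemma delta_hat_0 : delta_hat delta 0 = 0.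
Proof.
  destruct delta_diag as [HI [Hle _]].
  assert (H1 := HI 0 in_I_0). assert (H2 := Hle 0 in_I_0).
  unfold in_I, delta_hat in *. lra.
Qed.

Lemma delta_hat_1 : delta_hat delta 1 = 0.
Proof. destruct delta_diag as [_ [_ [_ H1]]]. unfold delta_hat. rewrite H1. ring. Qed.

Lemma U_delta_eq_U_of (x y : R) : in_I x -> in_I y ->
  U_delta delta x y = U_of (delta_hat delta) (tvar (delta_hat delta) 0) x y.
Proof.
  intros Ix Iy. unfold U_delta, U_of.
  rewrite (TV_eq_tvar_sub _ delta_hat_lipschitz x y Ix Iy). reflexivity.
Qed.

End DiagonalSection.

Theorem theorem3p3 (delta : R -> R) :
  is_diagonal_section delta ->
  is_copula (U_delta delta) /\
  (forall t, in_I t -> U_delta delta t t = delta t).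
Proof.
  intros Hdelta.
  assert (Hcontrol := tvar_controls _ (delta_hat_lipschitz delta Hdelta)).
  split.
  - apply (is_copula_ext _ _ (U_delta_eq_U_of delta Hdelta)).
    apply U_of_copula; auto using delta_hat_ge0, delta_hat_0, delta_hat_1.
  - intros t It. rewrite (U_delta_eq_U_of delta Hdelta t t It It).
    rewrite (U_of_diag _ _ (delta_hat_ge0 delta Hdelta) t It).
    unfold delta_hat. ring.
Qed.
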